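(* Let $q$ be a prime with $q\equiv 1 \pmod 4$ and let $\zeta\in\mathbb Z$ be such that its residue generates $(\mathbb Z/q)^\times$. Let $D$ be the group of order $q^3$ generated by $d_1,d_2,d_3$ of order $q$, with $D = (\langle d_3\rangle\times\langle d_2\rangle)\rtimes\langle d_1\rangle$, where $d_3$ is central and $d_1^{-1}d_2d_1 = d_2d_3$. Let $\tau,\alpha_1,\alpha_2$ be the automorphisms of $D$ given by $\tau: d_1\mapsto d_2,\ d_2\mapsto d_1,\ d_3\mapsto d_3^{-1}$; $\alpha_1: d_1\mapsto d_1^{\zeta},\ d_2\mapsto d_2,\ d_3\mapsto d_3^{\zeta}$; $\alpha_2: d_1\mapsto d_1,\ d_2\mapsto d_2^{\zeta},\ d_3\mapsto d_3^{\zeta}$, and let $A=\langle\tau,\alpha_1,\alpha_2\rangle\le \operatorname{Aut}(D)$. Let $\Delta: A\to \operatorname{GL}_2(q)$ be the homomorphism with $\Delta(\tau)=\begin{pmatrix}0&1\\1&0\end{pmatrix}$, $\Delta(\alpha_1)=\begin{pmatrix}\zeta&0\\0&1\end{pmatrix}$, $\Delta(\alpha_2)=\begin{pmatrix}1&0\\0&\zeta\end{pmatrix}$. Let $M=\mathbb F_q^3$ (column vectors) with the left action of $D\rtimes A$ in which $d_1$ acts by $\begin{pmatrix}1&1&0\\0&1&0\\0&0&1\end{pmatrix}$, $d_2$ acts by $\begin{pmatrix}1&0&1\\0&1&0\\0&0&1\end{pmatrix}$, $d_3$ acts as the identity, and $a\in A$ acts by $\det(\Delta(a))\cdot\begin{pmatrix}1&0\\0&\Delta(a^{-1})^{\top}\end{pmatrix}$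 (a block diagonal matrix with a $1\times1$ block and a $2\times2$ block). Define $$\chi: D\to M,\quad d_1^{n_1}d_2^{n_2}d_3^{n_3}\mapsto \begin{pmatrix} n_3-\tfrac12 n_1n_2\\ -\tfrac12 n_2\\ \tfrac12 n_1\end{pmatrix}$$ (entries computed in $\mathbb F_q$). Then $(M,\chi)$ is an $A$-equivariant IYB-structure on $D$, and every $A$-equivariant IYB-structure on $D$ is isomorphic to $(M,\chi)$.
   Context: For a group $G$ and a left $\mathbb Z G$-module $M$, a $1$-cocycle is a map $\chi: G \to M$ with $\chi(gh) = \chi(g) + g\chi(h)$ for all $g,h\in G$. If a group $A$ acts on a finite group $G$ from the left by automorphisms (written $g\mapsto {}^a g$), an $A$-equivariant IYB-structure on $G$ is a pair $(M,\chi)$ where $M$ is a left $\mathbb Z[G\rtimes A]$-module and $\chi: G\to M$ (with $M$ regarded as a $G$-module by restriction) is a bijective $1$-cocycle satisfying $\chi({}^a g) = a\chi(g)$ for all $a\in A$, $g\in G$. Two $A$-equivariant IYB-structures $(M,\chi)$ and $(M',\chi')$ on $G$ are isomorphic if there is a $\mathbb Z[G\rtimes A]$-module isomorphism $\varphi: M\to M'$ with $\chi'=\varphi\circ\chi$. *)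

From HB Require Import structures.
From mathcomp Require Import all_boot all_order all_algebra all_fingroup.
From mathcomp Require Import center.
Set Implicit Arguments.
Unset Strict Implicit.
Unset Printing Implicit Defensive.
Import GRing.Theory.

(* CONVENTION: in MathComp, permutations compose left-to-right:
   (s * t)%g x = t (s x).  Hence the composition a \o b (first b, then a)
   of automorphisms a, b is the MathComp product (b * a)%g.  All "left action"
   and "homomorphism" axioms below for the group A of automorphisms are stated
   with respect to composition a \o b, i.e. using (b * a)%g. *)

Section IYB.
Variable gT : finGroupType.

Definition zexpg (x : gT) (z : int) : gT :=
  match z with
  | Posz n => (x ^+ n)%g
  | Negz n => ((x ^+ n.+1)^-1)%g
  end.

(* A left Z[G \rtimes A]-module structure on M, where A is a group of
   automorphisms of G (acting by evaluation a g), given by the restricted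
   actions of G and of A (this is exactly a module over the semidirect product). *)
Definition sdmodule (G : {set gT}) (A : {set {perm gT}}) (M : zmodType)
  (actG : gT -> M -> M) (actA : {perm gT} -> M -> M) : Prop :=
  [/\ (forall g, g \in G -> forall m m', actG g (m + m')%R = (actG g m + actG g m')%R),
      (forall m, actG 1%g m = m)
    & (forall g h, g \in G -> h \in G -> forall m, actG (g * h)%g m = actG g (actG h m))] /\
  [/\ (forall a, a \in A -> forall m m', actA a (m + m')%R = (actA a m + actA a m')%R),
      (forall m, actA 1%g m = m),
      (forall a b, a \in A -> b \in A -> forall m, actA (b * a)%g m = actA a (actA b m))
    & (forall a g, a \in A -> g \in G -> forall m, actA a (actG g m) = actG (a g) (actA a m))].

Definition IYB_structure (G : {set gT}) (A : {set {perm gT}}) (M : zmodType)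
  (actG : gT -> M -> M) (actA : {perm gT} -> M -> M) (chi : gT -> M) : Prop :=
  [/\ sdmodule G A actG actA,
      (forall g h, g \in G -> h \in G -> chi (g * h)%g = (chi g + actG g (chi h))%R),
      {in G &, injective chi},
      (forall m, exists2 g, g \in G & chi g = m)
    & (forall a g, a \in A -> g \in G -> chi (a g) = actA a (chi g))].

Definition IYB_iso (G : {set gT}) (A : {set {perm gT}})
  (M1 : zmodType) (actG1 : gT -> M1 -> M1) (actA1 : {perm gT} -> M1 -> M1) (chi1 : gT -> M1)
  (M2 : zmodType) (actG2 : gT -> M2 -> M2) (actA2 : {perm gT} -> M2 -> M2) (chi2 : gT -> M2)
  : Prop :=
  exists phi : M1 -> M2,
    [/\ (forall m m', phi (m + m')%R = (phi m + phi m')%R),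
        bijective phi,
        (forall g, g \in G -> forall m, phi (actG1 g m) = actG2 g (phi m)),
        (forall a, a \in A -> forall m, phi (actA1 a m) = actA2 a (phi m))
      & (forall g, g \in G -> chi2 g = phi (chi1 g))].
End IYB.

Local Open Scope ring_scope.
Definition swap2 (F : fieldType) : 'M[F]_2 :=
  \matrix_(i < 2, j < 2) (i != j :> nat)%:R.
Definition diag2 (F : fieldType) (x y : F) : 'M[F]_2 :=
  \matrix_(i < 2, j < 2) (if i == j :> nat then (if i == 0 :> nat then x else y) else 0%R).
Definition matX1 (F : fieldType) : 'M[F]_3 :=
  \matrix_(i < 3, j < 3) ((i == j :> nat) || ((i == 0 :> nat) && (j == 1 :> nat)))%:R.
Definition matX2 (F : fieldType) : 'M[F]_3 :=
  \matrix_(i < 3, j < 3) ((i == j :> nat) || ((i == 0 :> nat) && (j == 2 :> nat)))%:R.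

Definition actA_M (F : fieldType) (gT : finGroupType) (Delta : {perm gT} -> 'M[F]_2)
  (a : {perm gT}) (m : 'cV[F]_3) : 'cV[F]_3 :=
  ((\det (Delta a)) *: (block_mx (1%:M : 'M[F]_1) 0 0 (Delta a^-1)%g^T *m m))%R.

(* the value of chi on d1^n1 d2^n2 d3^n3 *)
Definition chi_val (F : fieldType) (n1 n2 n3 : nat) : 'cV[F]_3 :=
  \col_(i < 3) (if i == 0 :> nat then (n3%:R - n1%:R * n2%:R / 2%:R)%R
                else if i == 1 :> nat then (- (n2%:R / 2%:R))%R
                else (n1%:R / 2%:R)%R).

(* Existence is a computation: the cocycle and equivariance identities need
   only be checked on the generators [d1, d2, d3] of [D] and [tau, alpha1,
   alpha2] of [A], and [chi] is bijective because its coordinates recover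
   [n1, n2, n3] modulo [q].
   For uniqueness, let [(N, c)] be another structure. Reading them off
   [(M, chi)], the fixed points of [alpha2], [alpha1] and [alpha1 alpha2^-1]
   in [D] are [<d1>], [<d2>] and [<d3>]. As [c] is an equivariant bijection,
   the fixed points of the same automorphism of [N] form the subgroup
   [c <d_i>] of order [q]; [d_i] acts on it by an automorphism of order
   dividing [q], hence trivially, so [c] is additive on [<d_i>] and
   [x_i := c d_i] has order [q]. The eigenvalues of [alpha1] and [alpha2]
   make [x1, x2, x3] an ['F_q]-basis of [N], and they determine, together
   with [d2 d1 = d1 d2 d3] and [tau], how [D] acts on this basis. Hence
   [c (d1^n1 d2^n2 d3^n3) = n1 x1 + n2 x2 + (n3 - n1 n2 / 2) x3], and the
   linear map sending [chi d_i] to [x_i] is the required isomorphism. *)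
From HB Require Import structures.
From mathcomp Require Import all_boot all_order all_algebra all_fingroup.
From mathcomp Require Import center cyclic finfield ring zify.
Import GRing.Theory.
Local Open Scope ring_scope.
Set Implicit Arguments.
Unset Strict Implicit.
Unset Printing Implicit Defensive.

Lemma gen_prodg_ind (T : finGroupType) (S : {set T}) (P : T -> Prop) :
  P 1%g -> (forall x g, x \in S -> g \in <<S>>%g -> P g -> P (x * g)%g) ->
  {in <<S>>%g, forall g, P g}.
Proof.
move=> P1 PM g /gen_prodgP [n [c Sc ->]].
elim: n c Sc => [|n IHn] c Sc; first by rewrite big_ord0.
rewrite big_ord_recl; apply: PM; first exact: Sc.
  by apply: group_prod => i _; apply: mem_gen.
exact: IHn.
Qed.

Lemma set3P (T : finType) (x a b c : T) :
  reflect [\/ x = a, x = b | x = c] (x \in [set a; b; c]).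
Proof.
rewrite !inE -orbA; apply: (iffP or3P) => -[] /eqP ->;
  by [apply: Or31 | apply: Or32 | apply: Or33 | rewrite eqxx ?orbT].
Qed.

Section AdditiveMaps.
Variables (M N : zmodType) (f : M -> N).
Hypothesis fD : {morph f : a b / a + b}.

Lemma morphD0 : f 0 = 0.
Proof. by apply: (addrI (f 0)); rewrite -fD !addr0. Qed.

Lemma morphDMn n y : f (y *+ n) = f y *+ n.
Proof. by elim: n => [|n IHn]; rewrite ?morphD0 // !mulrS fD IHn. Qed.

Lemma morphDN y : f (- y) = - f y.
Proof. by apply/eqP; rewrite -addr_eq0 -fD addNr morphD0. Qed.

End AdditiveMaps.

(* The elements [y] with [y *+ q = 0] form an ['F_q]-vector space, with
   scalar multiplication [scaleFp]. *)
Section ScaleFp.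
Variables (q : nat) (N : zmodType).
Hypothesis q_pr : prime q.
Local Notation F := 'F_q.

Lemma Fp_nat_eq n m : ((n%:R : F) = m%:R) <-> (n = m %[mod q])%N.
Proof.
split => [/(congr1 val)|eq_nm]; first by rewrite /= !val_Fp_nat.
by rewrite -(Fp_nat_mod q_pr n) eq_nm Fp_nat_mod.
Qed.

Lemma Fp_expq (s : F) : s ^+ q = s.
Proof. by have := expf_card s; rewrite card_Fp. Qed.

Definition scaleFp (s : F) (y : N) := y *+ val s.

Lemma scale0Fp y : scaleFp 0 y = 0.
Proof. by rewrite /scaleFp /= mulr0n. Qed.

Lemma scaleFpDr s : {morph scaleFp s : y z / y + z}.
Proof. by move=> y z; rewrite /scaleFp mulrnDl. Qed.

Lemma scaleFp_morph f s y :
  {morph f : a b / a + b} -> f (scaleFp s y) = scaleFp s (f y).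
Proof. by move=> fD; rewrite /scaleFp morphDMn. Qed.

Section Torsion.
Variable y : N.
Hypothesis yq : y *+ q = 0.

Lemma mulrn_Fp n m : (n%:R : F) = m%:R -> y *+ n = y *+ m.
Proof.
have modq k : y *+ k = y *+ (k %% q).
  by rewrite {1}(divn_eq k q) mulrnDr mulnC mulrnA yq mul0rn add0r.
by move/Fp_nat_eq=> eq_nm; rewrite modq [RHS]modq eq_nm.
Qed.

Lemma scaleFp_nat n : scaleFp n%:R y = y *+ n.
Proof. by apply: mulrn_Fp; rewrite natr_Zp. Qed.

Lemma scaleFpDl s t : scaleFp (s + t) y = scaleFp s y + scaleFp t y.
Proof. by rewrite /scaleFp -mulrnDr; apply: mulrn_Fp; rewrite natrD !natr_Zp. Qed.

Lemma scaleFpA s t : scaleFp (s * t) y = scaleFp s (scaleFp t y).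
Proof. by rewrite /scaleFp -mulrnA; apply: mulrn_Fp; rewrite natrM !natr_Zp mulrC. Qed.

Lemma scale1Fp : scaleFp 1 y = y.
Proof. by rewrite -[1]/(1%:R) scaleFp_nat. Qed.

Lemma scaleNFp s : scaleFp (- s) y = - scaleFp s y.
Proof. by apply/eqP; rewrite -addr_eq0 -scaleFpDl addNr scale0Fp. Qed.

Lemma scaleFp_eq0 s : y != 0 -> scaleFp s y = 0 -> s = 0.
Proof.
move=> y_neq0 sy0; apply/eqP; apply: contraNT y_neq0 => s_neq0.
by rewrite -scale1Fp -(mulVf s_neq0) scaleFpA sy0 /scaleFp mul0rn.
Qed.

(* If [f y = s y] then [f^q y = s^q y = s y] by Fermat. *)
Lemma scaleFp_iter_fixed f s : {morph f : a b / a + b} ->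
  f y = scaleFp s y -> iter q f y = y -> f y = y.
Proof.
move=> fD fy.
have iterE n : iter n f y = scaleFp (s ^+ n) y.
  elim: n => [|n IHn]; first by rewrite expr0 scale1Fp.
  by rewrite iterS IHn scaleFp_morph // fy -scaleFpA -exprSr.
by rewrite iterE Fp_expq fy.
Qed.

End Torsion.
End ScaleFp.

(* [e] enumerates, with period [q], a [q]-element subset of [N] closed under
   addition, i.e. a subgroup of prime order [q]. *)
Section PrimeOrderSubgroup.
Variables (q : nat) (N : zmodType) (e : nat -> N).
Hypotheses (q_pr : prime q)
  (e_inj : forall i j, (i < q)%N -> (j < q)%N -> e i = e j -> i = j)
  (e_mod : forall n, e n = e (n %% q)) (e0 : e 0 = 0)
  (e_addr_closed : forall i j, exists k, e i + e j = e k).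

Let q_gt0 : (0 < q)%N. Proof. exact: prime_gt0. Qed.

Let e_addr_closed_ord i j : exists k : 'I_q, e i + e j = e k.
Proof.
have [k ek] := e_addr_closed i j.
by exists (Ordinal (ltn_pmod k q_gt0)); rewrite ek /= e_mod.
Qed.

(* Adding [e j] permutes the subgroup, so it leaves its sum unchanged. *)
Lemma enum_subgroup_torsion j : e j *+ q = 0.
Proof.
pose tr (i : 'I_q) := odflt i [pick k : 'I_q | e k == e i + e j].
have trE i : e (tr i) = e i + e j.
  rewrite /tr; case: pickP => [k /eqP //|none].
  by have [k ek] := e_addr_closed_ord i j; have := none k; rewrite ek eqxx.
have tr_inj : injective tr.
  move=> i i' eq_tr; apply/val_inj/e_inj; rewrite ?ltn_ord //.
  by apply: (addIr (e j)); rewrite -!trE eq_tr.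
have := reindex_inj (op := +%R) (x := 0) (P := predT)
  (F := fun i : 'I_q => e i) tr_inj.
under [X in _ = X -> _]eq_bigr => i _ do rewrite trE.
rewrite big_split /= sumr_const card_ord => /eqP.
by rewrite -subr_eq0 opprD addrA subrr add0r oppr_eq0 => /eqP.
Qed.

Lemma enum_subgroup_multiple i : exists n, e i = e 1 *+ n.
Proof.
set x := e 1; have xq : x *+ q = 0 by exact: enum_subgroup_torsion.
have x_neq0 : x != 0.
  by apply/eqP=> x0; have := e_inj (prime_gt1 q_pr) q_gt0; rewrite e0 => /(_ x0).
have multiple_in n : exists k : 'I_q, e k = x *+ n.
  elim: n => [|n [k ek]]; first by exists (Ordinal q_gt0); rewrite e0.
  by have [k' ek'] := e_addr_closed_ord 1 k; exists k'; rewrite mulrS -ek' ek.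
pose h (n : 'I_q) := odflt n [pick k : 'I_q | e k == x *+ n].
have hE n : e (h n) = x *+ n.
  rewrite /h; case: pickP => [k /eqP //|none].
  by have [k ek] := multiple_in n; have := none k; rewrite ek eqxx.
have h_inj : injective h.
  move=> n m eq_h; have := congr1 (fun k : 'I_q => e k) eq_h.
  rewrite /= !hE -!(scaleFp_nat q_pr xq) => eq_nm.
  have /eqP : (n%:R - m%:R : 'F_q) = 0.
    by apply: (scaleFp_eq0 q_pr xq x_neq0); rewrite scaleFpDl ?scaleNFp // eq_nm subrr.
  rewrite subr_eq0 => /eqP /(Fp_nat_eq q_pr).
  by rewrite !modn_small // => /val_inj.
have := inj_card_onto h_inj (leqnn _) (Ordinal (ltn_pmod i q_gt0)).
by case/codomP => n hn; exists n; rewrite e_mod -hE -hn.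
Qed.

Lemma enum_subgroup_fixed f : {morph f : a b / a + b} ->
  (forall i, exists k, f (e i) = e k) -> iter q f (e 1) = e 1 -> f (e 1) = e 1.
Proof.
move=> fD f_closed; have [k fe1] := f_closed 1%N.
have [n ek] := enum_subgroup_multiple k.
have e1q := enum_subgroup_torsion 1.
by apply: (scaleFp_iter_fixed q_pr e1q (s := n%:R) fD); rewrite fe1 ek scaleFp_nat.
Qed.

End PrimeOrderSubgroup.

Definition col3 (R : zmodType) (x y z : R) : 'cV[R]_3 :=
  \col_(i < 3) (if i == 0 :> nat then x else if i == 1 :> nat then y else z).

Section Col3.
Variable R : zmodType.

Lemma col3E (m : 'cV[R]_3) : m = col3 (m 0 0) (m 1 0) (m 2 0).
Proof.
apply/matrixP => i j; rewrite !mxE ord1.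
by case: i => [[|[|[|//]]] lti]; congr (m _ _); apply/val_inj.
Qed.

Lemma col3_inj (x y z x' y' z' : R) :
  col3 x y z = col3 x' y' z' -> [/\ x = x', y = y' & z = z'].
Proof.
move=> eq_col; have entry i := congr1 (fun m : 'cV_3 => m i 0) eq_col.
by have := entry 0; have := entry 1; have := entry 2; rewrite !mxE.
Qed.

Lemma col3D (x y z x' y' z' : R) :
  col3 x y z + col3 x' y' z' = col3 (x + x') (y + y') (z + z').
Proof. by apply/matrixP => i j; rewrite !mxE; case: ifP => //; case: ifP. Qed.

Lemma col30 : col3 0 0 0 = 0 :> 'cV[R]_3.
Proof. by apply/matrixP => i j; rewrite !mxE; case: ifP => //; case: ifP. Qed.

Lemma col3_surj (m : 'cV[R]_3) : exists x y w, m = col3 x y w.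
Proof. by exists (m 0 0), (m 1 0), (m 2 0); apply: col3E. Qed.

End Col3.

Lemma mul_neq_eq0 (F : fieldType) (s t x : F) : s != t -> s * x = t * x -> x = 0.
Proof.
move=> neq_st eq_stx; apply/eqP; have : (s - t) * x == 0 by rewrite mulrBl eq_stx subrr.
by rewrite mulf_eq0 subr_eq0 (negPf neq_st).
Qed.

Lemma det_mx22 (R : comPzRingType) (M : 'M[R]_2) :
  \det M = M 0 0 * M 1 1 - M 0 1 * M 1 0.
Proof.
rewrite (expand_det_row M 0) !big_ord_recr big_ord0 /= /cofactor !det_mx11 !mxE /=.
rewrite add0r expr0 expr1 mul1r mulN1r mulrN.
by congr (M _ _ * M _ _ - M _ _ * M _ _); apply/val_inj.
Qed.

Lemma actA_M_col3 (F : fieldType) (gT : finGroupType)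
    (Delta : {perm gT} -> 'M[F]_2) a x y z :
  let d := \det (Delta a) in let B := Delta (a^-1)%g in
  actA_M Delta a (col3 x y z) =
  col3 (d * x) (d * (B 0 0 * y + B 1 0 * z)) (d * (B 0 1 * y + B 1 1 * z)).
Proof.
have blockE (i j : 'I_3) : (block_mx (1%:M : 'M[F]_1) 0 0 (Delta a^-1)%g^T) i j =
    if i == 0 :> nat then (j == 0 :> nat)%:R
    else if j == 0 :> nat then 0 else (Delta a^-1)%g (inord j.-1) (inord i.-1).
  rewrite [LHS]mxE; case: splitP => k ik; rewrite !mxE;
    case: splitP => l jl; rewrite ?mxE ik jl ?ord1 //=.
  by rewrite !inord_val.
have inord0 : (inord 0 : 'I_2) = 0 by apply/val_inj; rewrite /= inordK.
have inord1 : (inord 1 : 'I_2) = 1 by apply/val_inj; rewrite /= inordK.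
apply/matrixP => i j; rewrite /actA_M !mxE !big_ord_recr big_ord0 /= !blockE !mxE /=.
by case: i => [[|[|[|//]]] lti] /=;
  rewrite ?mulr0 ?mul0r ?mulr1 ?mul1r ?addr0 ?add0r ?inord0 ?inord1.
Qed.

Section Matrices.
Variable F : fieldType.

Lemma swap2_sqr : swap2 F *m swap2 F = 1%:M.
Proof.
apply/matrixP => i j; rewrite !mxE !big_ord_recr big_ord0 /= !mxE.
by case: i => [[|[|//]] ?]; case: j => [[|[|//]] ?] /=;
  rewrite ?mul0r ?mulr0 ?mul1r ?add0r ?addr0.
Qed.

Lemma diag2_mul (x y x' y' : F) :
  diag2 x y *m diag2 x' y' = diag2 (x * x') (y * y').
Proof.
apply/matrixP => i j; rewrite !mxE !big_ord_recr big_ord0 /= !mxE.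
by case: i => [[|[|//]] ?]; case: j => [[|[|//]] ?] /=;
  rewrite ?mul0r ?mulr0 ?mul1r ?add0r ?addr0.
Qed.

Lemma diag2_11 : diag2 (1 : F) 1 = 1%:M.
Proof.
by apply/matrixP => i j; rewrite !mxE; case: i => [[|[|//]] ?]; case: j => [[|[|//]] ?].
Qed.

Lemma det_swap2 : \det (swap2 F) = -1.
Proof. by rewrite det_mx22 !mxE /= mul0r mul1r sub0r. Qed.

Lemma det_diag2 (x y : F) : \det (diag2 x y) = x * y.
Proof. by rewrite det_mx22 !mxE /= mul0r subr0. Qed.

Lemma matX1_col3 (x y z : F) : matX1 F *m col3 x y z = col3 (x + y) y z.
Proof.
apply/matrixP => i j; rewrite !mxE !big_ord_recr big_ord0 /= !mxE.
by case: i => [[|[|[|//]]] ?] /=; rewrite ?mul0r ?mulr0 ?mul1r ?add0r ?addr0.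
Qed.

Lemma matX2_col3 (x y z : F) : matX2 F *m col3 x y z = col3 (x + z) y z.
Proof.
apply/matrixP => i j; rewrite !mxE !big_ord_recr big_ord0 /= !mxE.
by case: i => [[|[|[|//]]] ?] /=; rewrite ?mul0r ?mulr0 ?mul1r ?add0r ?addr0.
Qed.

Lemma actA_M_add (gT : finGroupType) (Delta : {perm gT} -> 'M[F]_2) a :
  {morph actA_M Delta a : m m' / m + m'}.
Proof. by move=> m m'; rewrite /actA_M mulmxDr scalerDr. Qed.

Lemma actA_M_morph (gT : finGroupType) (Delta : {perm gT} -> 'M[F]_2) a b m :
  Delta (b * a)%g = Delta a *m Delta b ->
  Delta (b * a)^-1%g = Delta b^-1%g *m Delta a^-1%g ->
  actA_M Delta (b * a)%g m = actA_M Delta a (actA_M Delta b m).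
Proof.
move=> DeltaM DeltaVM; rewrite /actA_M DeltaM DeltaVM det_mulmx trmx_mul.
have blockM (X Y : 'M[F]_2) : block_mx (1%:M : 'M_1) 0 0 (X *m Y) =
    block_mx 1%:M 0 0 X *m block_mx 1%:M 0 0 Y.
  by rewrite mulmx_block !mulmx0 !mul0mx !addr0 !add0r mulmx1.
by rewrite blockM -scalemxAr scalerA mulmxA mulrC.
Qed.

End Matrices.

Section Setting.
Variables (q : nat) (zeta : int) (gT : finGroupType) (D : {group gT})
  (d1 d2 d3 : gT) (tau alpha1 alpha2 : {perm gT}) (Delta : {perm gT} -> 'M['F_q]_2)
  (rho : gT -> 'M['F_q]_3) (chi : gT -> 'cV['F_q]_3).
Hypotheses (q_pr : prime q) (q_mod4 : (q %% 4 = 1)%N)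
  (zeta_prim : (q.-1).-primitive_root (zeta%:~R : 'F_q))
  (card_D : #|D| = (q ^ 3)%N) (D_gen : D :=: <<[set d1; d2; d3]>>%g)
  (ord_d1 : #[d1]%g = q) (ord_d2 : #[d2]%g = q) (ord_d3 : #[d3]%g = q)
  (d3_center : d3 \in 'Z(D)%g) (d1_conj_d2 : (d1^-1 * d2 * d1)%g = (d2 * d3)%g)
  (tau_Aut : tau \in Aut D) (alpha1_Aut : alpha1 \in Aut D)
  (alpha2_Aut : alpha2 \in Aut D)
  (tau_d1 : tau d1 = d2) (tau_d2 : tau d2 = d1) (tau_d3 : tau d3 = (d3^-1)%g)
  (alpha1_d1 : alpha1 d1 = zexpg d1 zeta) (alpha1_d2 : alpha1 d2 = d2)
  (alpha1_d3 : alpha1 d3 = zexpg d3 zeta)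
  (alpha2_d1 : alpha2 d1 = d1) (alpha2_d2 : alpha2 d2 = zexpg d2 zeta)
  (alpha2_d3 : alpha2 d3 = zexpg d3 zeta).
Let A := <<[set tau; alpha1; alpha2]>>%g.
Hypotheses
  (Delta_morph : forall a b, a \in A -> b \in A -> Delta (b * a)%g = Delta a *m Delta b)
  (Delta_tau : Delta tau = swap2 _) (Delta_alpha1 : Delta alpha1 = diag2 zeta%:~R 1)
  (Delta_alpha2 : Delta alpha2 = diag2 1 zeta%:~R)
  (rho_morph : forall g h, g \in D -> h \in D -> rho (g * h)%g = rho g *m rho h)
  (rho_d1 : rho d1 = matX1 _) (rho_d2 : rho d2 = matX2 _) (rho_d3 : rho d3 = 1)
  (chi_nf : forall n1 n2 n3 : nat,
     chi (d1 ^+ n1 * d2 ^+ n2 * d3 ^+ n3)%g = chi_val _ n1 n2 n3).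

Local Notation F := 'F_q.
Local Notation z := (zeta%:~R : F).

(* The only use of [q = 1 mod 4]: it excludes [q = 2], where [2] is not
   invertible, and [q = 3], where [zeta^-1 = zeta]. *)
Lemma q_ge5 : (5 <= q)%N.
Proof. by have := prime_gt1 q_pr; move: q_mod4; lia. Qed.

Lemma two_neq0 : (2%:R : F) != 0.
Proof.
rewrite -(dvdn_pcharf (pchar_Fp q_pr)).
by apply: contraL q_ge5 => /(dvdn_leq (isT : (0 < 2)%N)); lia.
Qed.

Lemma Fp_pred : ((q.-1)%:R : F) = -1.
Proof.
apply/eqP; rewrite -addr_eq0 -mulrSr prednK ?prime_gt0 //.
by rewrite -(dvdn_pcharf (pchar_Fp q_pr)).
Qed.

(** * The group [D] and its automorphisms *)

Lemma d1_in_D : d1 \in D. Proof. by rewrite D_gen mem_gen // !inE eqxx. Qed.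
Lemma d2_in_D : d2 \in D. Proof. by rewrite D_gen mem_gen // !inE eqxx !orbT. Qed.
Lemma d3_in_D : d3 \in D. Proof. by rewrite D_gen mem_gen // !inE eqxx !orbT. Qed.

Lemma gen_in_D x : x \in [set d1; d2; d3] -> x \in D.
Proof. by rewrite D_gen; apply: mem_gen. Qed.

Lemma d3_comm g : g \in D -> commute d3 g.
Proof. by have [_ d3C] := centerP _ _ d3_center; apply: d3C. Qed.

Lemma d3X_comm g n : g \in D -> commute (d3 ^+ n) g.
Proof. by move=> Dg; apply/commute_sym/commuteX/commute_sym/d3_comm. Qed.

Lemma d2_d1 : (d2 * d1 = d1 * d2 * d3)%g.
Proof. by rewrite -mulgA -d1_conj_d2 !mulgA mulgV mul1g. Qed.

Lemma d2_d1X n : (d2 * d1 ^+ n = d1 ^+ n * d2 * d3 ^+ n)%g.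
Proof.
elim: n => [|n IHn]; first by rewrite !expg0 !mulg1 mul1g.
rewrite expgSr mulgA IHn -mulgA (d3X_comm _ d1_in_D) !mulgA -(mulgA _ d2 d1) d2_d1.
by rewrite !mulgA -expgSr -mulgA -expgS.
Qed.

Lemma nf_in_D a b c : (d1 ^+ a * d2 ^+ b * d3 ^+ c)%g \in D.
Proof. by rewrite !groupM ?groupX ?d1_in_D ?d2_in_D ?d3_in_D. Qed.

Lemma d1_mul_nf a b c :
  (d1 * (d1 ^+ a * d2 ^+ b * d3 ^+ c) = d1 ^+ a.+1 * d2 ^+ b * d3 ^+ c)%g.
Proof. by rewrite !mulgA expgS. Qed.

Lemma d2_mul_nf a b c :
  (d2 * (d1 ^+ a * d2 ^+ b * d3 ^+ c) = d1 ^+ a * d2 ^+ b.+1 * d3 ^+ (a + c))%g.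
Proof.
rewrite !mulgA d2_d1X expgD expgS !mulgA -(mulgA _ (d3 ^+ a) (d2 ^+ b))%g.
by rewrite d3X_comm ?groupX ?d2_in_D // !mulgA.
Qed.

Lemma d3_mul_nf a b c :
  (d3 * (d1 ^+ a * d2 ^+ b * d3 ^+ c) = d1 ^+ a * d2 ^+ b * d3 ^+ c.+1)%g.
Proof. by rewrite d3_comm ?nf_in_D // expgSr !mulgA. Qed.

Lemma D_nf g : g \in D -> exists a b c, g = (d1 ^+ a * d2 ^+ b * d3 ^+ c)%g.
Proof.
rewrite D_gen; move: g; apply: (gen_prodg_ind
  (P := fun g => exists a b c, g = (d1 ^+ a * d2 ^+ b * d3 ^+ c)%g)).
  by exists 0%N, 0%N, 0%N; rewrite !mulg1.
move=> x _ + _ [a [b [c ->]]].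
case/set3P => ->.
- by exists a.+1, b, c; rewrite d1_mul_nf.
- by exists a, b.+1, (a + c)%N; rewrite d2_mul_nf.
- by exists a, b, c.+1; rewrite d3_mul_nf.
Qed.

Lemma tau_in_A : tau \in A. Proof. by rewrite mem_gen // !inE eqxx. Qed.
Lemma alpha1_in_A : alpha1 \in A. Proof. by rewrite mem_gen // !inE eqxx !orbT. Qed.
Lemma alpha2_in_A : alpha2 \in A. Proof. by rewrite mem_gen // !inE eqxx !orbT. Qed.

Lemma gen_in_A a : a \in [set tau; alpha1; alpha2] -> a \in A.
Proof. exact: mem_gen. Qed.

Lemma A_sub_Aut : A \subset Aut D.
Proof. by rewrite gen_subG; apply/subsetP => a /set3P [] ->. Qed.

Lemma A_in_D a x : a \in A -> x \in D -> a x \in D.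
Proof. by move=> Aa; apply: Aut_closed; apply: subsetP A_sub_Aut a Aa. Qed.

Lemma A_morphM a x y : a \in A -> x \in D -> y \in D -> a (x * y)%g = (a x * a y)%g.
Proof.
move=> Aa; have /morphicP aM := Aut_morphic (subsetP A_sub_Aut a Aa).
exact: aM.
Qed.

Lemma A_morph1 a : a \in A -> a 1%g = 1%g.
Proof. by move=> Aa; apply: (mulgI (a 1%g)); rewrite mulg1 -A_morphM ?mulg1. Qed.

Lemma A_morphX a x n : a \in A -> x \in D -> a (x ^+ n)%g = (a x ^+ n)%g.
Proof.
move=> Aa Dx; elim: n => [|n IHn]; first by rewrite !expg0 A_morph1.
by rewrite !expgS A_morphM ?groupX // IHn.
Qed.

(* A natural number congruent to [zeta] modulo [q], hence acting as the
   exponent [zeta] on elements of order [q]. *)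
Definition zeta_nat : nat :=
  if zeta is Negz n then (n.+1 * q.-1)%N else `|zeta|%N.

Lemma zexpgE (x : gT) : #[x]%g = q -> zexpg x zeta = (x ^+ zeta_nat)%g.
Proof.
rewrite /zeta_nat /zexpg; case: zeta => n // ord_x.
apply/eqP; rewrite eq_invg_mul -expgD addnC -mulnSr prednK ?prime_gt0 //.
by rewrite mulnC expgM -ord_x expg_order expg1n.
Qed.

Lemma zeta_natE : (zeta_nat%:R : F) = z.
Proof.
by rewrite /zeta_nat; case: zeta => n //; rewrite NegzE mulrNz natrM Fp_pred mulrN1.
Qed.

Lemma z_neq0 : z != 0.
Proof.
apply/eqP => z0; have := prim_expr_order zeta_prim; rewrite z0 expr0n.
by have := q_ge5; case: q => [|[|n]] //= _; rewrite eq_sym oner_eq0.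
Qed.

Lemma z_neq1 : z != 1.
Proof.
apply/eqP => z1; have := prim_order_dvd zeta_prim 1; rewrite expr1 z1 eqxx.
by have := q_ge5; case: q => [|[|[|n]]] //= _; rewrite dvdn1.
Qed.

Lemma zV_neq_z : z^-1 != z.
Proof.
apply/eqP => zV; have := prim_order_dvd zeta_prim 2.
rewrite expr2 -{1}zV mulVf ?z_neq0 // eqxx.
by have := q_ge5; case: q => [|[|[|[|[|n]]]]] //= _ /dvdn_leq.
Qed.

Lemma zV_neq1 : z^-1 != 1.
Proof. by apply: contra z_neq1 => /eqP zV; rewrite -[z]invrK zV invr1. Qed.

(** * Existence: the structure [(M, chi)] *)

Lemma Delta1 : Delta 1%g = 1.
Proof.
have := Delta_morph (group1 A) tau_in_A; rewrite mulg1 Delta_tau => DeltaE.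
have := congr1 (fun M : 'M[F]_2 => M *m swap2 F) DeltaE.
by rewrite -mulmxA swap2_sqr mulmx1.
Qed.

Lemma DeltaV a B : a \in A -> Delta a *m B = 1%:M -> Delta (a^-1)%g = B.
Proof.
move=> Aa DaB; have := Delta_morph (groupVr Aa) Aa; rewrite mulgV Delta1 => DeltaE.
by have := congr1 (fun M : 'M[F]_2 => M *m B) DeltaE; rewrite -mulmxA DaB mulmx1 mul1mx.
Qed.

Lemma actA_tau x y w : actA_M Delta tau (col3 x y w) = col3 (- x) (- w) (- y).
Proof.
rewrite actA_M_col3 (DeltaV tau_in_A (_ : _ *m swap2 F = _)) Delta_tau ?swap2_sqr //.
by rewrite det_swap2 !mxE /= !mul0r !mul1r add0r addr0 !mulN1r.
Qed.

Lemma actA_alpha1 x y w : actA_M Delta alpha1 (col3 x y w) = col3 (z * x) y (z * w).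
Proof.
have DeltaV1 : Delta alpha1 *m diag2 z^-1 1 = 1%:M.
  by rewrite Delta_alpha1 diag2_mul mulfV ?z_neq0 // mulr1 diag2_11.
rewrite actA_M_col3 (DeltaV alpha1_in_A DeltaV1) Delta_alpha1 det_diag2 !mxE /=.
by rewrite !mul0r !mul1r add0r addr0 mulr1 mulrA mulfV ?z_neq0 // mul1r.
Qed.

Lemma actA_alpha2 x y w : actA_M Delta alpha2 (col3 x y w) = col3 (z * x) (z * y) w.
Proof.
have DeltaV2 : Delta alpha2 *m diag2 1 z^-1 = 1%:M.
  by rewrite Delta_alpha2 diag2_mul mulfV ?z_neq0 // mulr1 diag2_11.
rewrite actA_M_col3 (DeltaV alpha2_in_A DeltaV2) Delta_alpha2 det_diag2 !mxE /=.
by rewrite !mul0r !mul1r add0r addr0 mulrA mulfV ?z_neq0 // mul1r.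
Qed.

Lemma actA1 m : actA_M Delta 1%g m = m.
Proof.
by rewrite [m]col3E actA_M_col3 invg1 Delta1 det1 !mxE /= !mul1r !mul0r addr0 add0r.
Qed.

Lemma actAM a b m : a \in A -> b \in A ->
  actA_M Delta (b * a)%g m = actA_M Delta a (actA_M Delta b m).
Proof. by move=> Aa Ab; apply: actA_M_morph; rewrite ?invMg Delta_morph ?groupV. Qed.

Lemma rho1 : rho 1%g = 1.
Proof. by have := rho_morph (group1 D) d3_in_D; rewrite mul1g rho_d3 mulmx1. Qed.

Lemma rho_mulmx g h (m : 'cV[F]_3) : g \in D -> h \in D ->
  rho (g * h)%g *m m = rho g *m (rho h *m m).
Proof. by move=> Dg Dh; rewrite rho_morph // mulmxA. Qed.

Lemma rho_d1X n x y w : rho (d1 ^+ n)%g *m col3 x y w = col3 (x + n%:R * y) y w.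
Proof.
elim: n x => [|n IHn] x; first by rewrite rho1 mul1mx mul0r addr0.
rewrite expgS rho_mulmx ?groupX ?d1_in_D // IHn rho_d1 matX1_col3 mulrS.
by congr col3; ring.
Qed.

Lemma rho_d2X n x y w : rho (d2 ^+ n)%g *m col3 x y w = col3 (x + n%:R * w) y w.
Proof.
elim: n x => [|n IHn] x; first by rewrite rho1 mul1mx mul0r addr0.
rewrite expgS rho_mulmx ?groupX ?d2_in_D // IHn rho_d2 matX2_col3 mulrS.
by congr col3; ring.
Qed.

Lemma rho_d3X n (m : 'cV[F]_3) : rho (d3 ^+ n)%g *m m = m.
Proof.
elim: n => [|n IHn]; first by rewrite rho1 mul1mx.
by rewrite expgS rho_mulmx ?groupX ?d3_in_D // IHn rho_d3 mul1mx.
Qed.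

Lemma chi_nf_col3 a b c : chi (d1 ^+ a * d2 ^+ b * d3 ^+ c)%g =
  col3 (c%:R - a%:R * b%:R / 2%:R) (- (b%:R / 2%:R)) (a%:R / 2%:R).
Proof. exact: chi_nf. Qed.

Lemma chi1 : chi 1%g = 0.
Proof. by have := chi_nf_col3 0 0 0; rewrite !mulg1 !mul0r subr0 oppr0 col30. Qed.

Lemma chi_d1X n : chi (d1 ^+ n)%g = col3 0 0 (n%:R / 2%:R).
Proof. by have := chi_nf_col3 n 0 0; rewrite !mulg1 !mulr0 !mul0r subr0 oppr0. Qed.

Lemma chi_d2X n : chi (d2 ^+ n)%g = col3 0 (- (n%:R / 2%:R)) 0.
Proof. by have := chi_nf_col3 0 n 0; rewrite mulg1 mul1g !mul0r subr0. Qed.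

Lemma chi_d3X n : chi (d3 ^+ n)%g = col3 n%:R 0 0.
Proof. by have := chi_nf_col3 0 0 n; rewrite !mul1g !mul0r subr0 oppr0. Qed.

Lemma chi_cocycle_gen x h : x \in [set d1; d2; d3] -> h \in D ->
  chi (x * h)%g = chi x + rho x *m chi h.
Proof.
move=> /set3P gen_x /D_nf [a [b [c ->]]]; have := two_neq0.
case: gen_x => ->; rewrite -[X in chi X + _]expg1.
- rewrite d1_mul_nf !chi_nf_col3 chi_d1X rho_d1 matX1_col3 col3D.
  by move=> ?; congr col3; field.
- rewrite d2_mul_nf !chi_nf_col3 chi_d2X rho_d2 matX2_col3 col3D natrD.
  by move=> ?; congr col3; field.
- rewrite d3_mul_nf !chi_nf_col3 chi_d3X rho_d3 mul1mx col3D.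
  by move=> ?; congr col3; field.
Qed.

Lemma chi_cocycle g h : g \in D -> h \in D -> chi (g * h)%g = chi g + rho g *m chi h.
Proof.
rewrite {1}D_gen; move: g; apply: (gen_prodg_ind (P := fun g =>
  h \in D -> chi (g * h)%g = chi g + rho g *m chi h)) => [|x g gen_x].
  by rewrite mul1g chi1 rho1 mul1mx add0r.
rewrite -D_gen => Dg IHg Dh; have Dx := gen_in_D gen_x.
rewrite -mulgA (chi_cocycle_gen gen_x (groupM Dg Dh)) (chi_cocycle_gen gen_x Dg).
by rewrite IHg // mulmxDr addrA rho_mulmx.
Qed.

Lemma actA_rho_gen a x m : a \in [set tau; alpha1; alpha2] -> x \in [set d1; d2; d3] ->
  actA_M Delta a (rho x *m m) = rho (a x) *m actA_M Delta a m.
Proof.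
move=> /set3P gen_a /set3P gen_x; have [u [v [w ->]]] := col3_surj m.
have rho_d3V : rho (d3^-1)%g = 1.
  by have := rho_morph (groupVr d3_in_D) d3_in_D; rewrite mulVg rho1 rho_d3 mulmx1.
case: gen_a => ->; case: gen_x => ->.
- by rewrite rho_d1 matX1_col3 !actA_tau tau_d1 rho_d2 matX2_col3 opprD.
- by rewrite rho_d2 matX2_col3 !actA_tau tau_d2 rho_d1 matX1_col3 opprD.
- by rewrite rho_d3 mul1mx !actA_tau tau_d3 rho_d3V mul1mx.
- rewrite rho_d1 matX1_col3 !actA_alpha1 alpha1_d1 zexpgE // rho_d1X zeta_natE.
  by congr col3; ring.
- by rewrite rho_d2 matX2_col3 !actA_alpha1 alpha1_d2 rho_d2 matX2_col3 mulrDr.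
- by rewrite rho_d3 mul1mx !actA_alpha1 alpha1_d3 zexpgE // rho_d3X.
- by rewrite rho_d1 matX1_col3 !actA_alpha2 alpha2_d1 rho_d1 matX1_col3 mulrDr.
- rewrite rho_d2 matX2_col3 !actA_alpha2 alpha2_d2 zexpgE // rho_d2X zeta_natE.
  by congr col3; ring.
- by rewrite rho_d3 mul1mx !actA_alpha2 alpha2_d3 zexpgE // rho_d3X.
Qed.

Lemma actA_rho_gen_aut a g m : a \in [set tau; alpha1; alpha2] -> g \in D ->
  actA_M Delta a (rho g *m m) = rho (a g) *m actA_M Delta a m.
Proof.
move=> gen_a Dg; have Aa := gen_in_A gen_a; move: g Dg m; rewrite D_gen.
apply: (gen_prodg_ind (P := fun g => forall m,
  actA_M Delta a (rho g *m m) = rho (a g) *m actA_M Delta a m)) => [|x g gen_x].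
  by move=> m; rewrite A_morph1 // rho1 !mul1mx.
rewrite -D_gen => Dg IHg m; have Dx := gen_in_D gen_x.
rewrite (rho_mulmx _ Dx Dg) (actA_rho_gen _ gen_a gen_x) IHg.
by rewrite (A_morphM Aa Dx Dg) (rho_mulmx _ (A_in_D Aa Dx) (A_in_D Aa Dg)).
Qed.

Lemma actA_rho a g m : a \in A -> g \in D ->
  actA_M Delta a (rho g *m m) = rho (a g) *m actA_M Delta a m.
Proof.
move=> Aa; move: a Aa g m; apply: (gen_prodg_ind (P := fun a => forall g m, g \in D ->
  actA_M Delta a (rho g *m m) = rho (a g) *m actA_M Delta a m)).
  by move=> g m _; rewrite !actA1 perm1.
move=> b a gen_b Aa IHa g m Dg.
have Ab := gen_in_A gen_b.
by rewrite !(actAM _ Aa Ab) permM (actA_rho_gen_aut _ gen_b Dg) (IHa _ _ (A_in_D Ab Dg)).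
Qed.

Lemma chi_d1 : chi d1 = col3 0 0 (1 / 2%:R).
Proof. by rewrite -[d1]expg1 chi_d1X. Qed.

Lemma chi_d2 : chi d2 = col3 0 (- (1 / 2%:R)) 0.
Proof. by rewrite -[d2]expg1 chi_d2X. Qed.

Lemma chi_d3 : chi d3 = col3 1 0 0.
Proof. by rewrite -[d3]expg1 chi_d3X. Qed.

Lemma chi_d3V : chi (d3^-1)%g = col3 (-1) 0 0.
Proof. by rewrite invg_expg ord_d3 chi_d3X Fp_pred. Qed.

Lemma chi_equiv_gen a x : a \in [set tau; alpha1; alpha2] -> x \in [set d1; d2; d3] ->
  chi (a x) = actA_M Delta a (chi x).
Proof.
move=> /set3P gen_a /set3P gen_x.
case: gen_a => ->; case: gen_x => ->.
- by rewrite tau_d1 chi_d1 chi_d2 actA_tau; congr col3; ring.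
- by rewrite tau_d2 chi_d1 chi_d2 actA_tau; congr col3; ring.
- by rewrite tau_d3 chi_d3V chi_d3 actA_tau; congr col3; ring.
- by rewrite alpha1_d1 zexpgE // chi_d1X chi_d1 actA_alpha1 zeta_natE; congr col3; ring.
- by rewrite alpha1_d2 chi_d2 actA_alpha1; congr col3; ring.
- by rewrite alpha1_d3 zexpgE // chi_d3X chi_d3 actA_alpha1 zeta_natE; congr col3; ring.
- by rewrite alpha2_d1 chi_d1 actA_alpha2; congr col3; ring.
- by rewrite alpha2_d2 zexpgE // chi_d2X chi_d2 actA_alpha2 zeta_natE; congr col3; ring.
- by rewrite alpha2_d3 zexpgE // chi_d3X chi_d3 actA_alpha2 zeta_natE; congr col3; ring.
Qed.

Lemma chi_equiv_gen_aut a g : a \in [set tau; alpha1; alpha2] -> g \in D ->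
  chi (a g) = actA_M Delta a (chi g).
Proof.
move=> gen_a Dg; have Aa := gen_in_A gen_a; move: g Dg; rewrite D_gen.
apply: (gen_prodg_ind (P := fun g => chi (a g) = actA_M Delta a (chi g))) => [|x g gen_x].
  by rewrite A_morph1 // chi1 /actA_M mulmx0 scaler0.
rewrite -D_gen => Dg IHg; have Dx := gen_in_D gen_x.
rewrite (A_morphM Aa Dx Dg) (chi_cocycle (A_in_D Aa Dx) (A_in_D Aa Dg)).
rewrite (chi_equiv_gen gen_a gen_x) IHg -(actA_rho_gen_aut _ gen_a Dx).
by rewrite -(actA_M_add Delta a) -(chi_cocycle Dx Dg).
Qed.

Lemma chi_equiv a g : a \in A -> g \in D -> chi (a g) = actA_M Delta a (chi g).
Proof.
move=> Aa; move: a Aa g; apply: (gen_prodg_ind (P := fun a : {perm gT} =>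
  forall g : gT, g \in D -> chi (a g) = actA_M Delta a (chi g))).
  by move=> g _; rewrite actA1 perm1.
move=> b a gen_b Aa IHa g Dg.
have Ab := gen_in_A gen_b.
by rewrite !(actAM _ Aa Ab) permM (IHa _ (A_in_D Ab Dg)) (chi_equiv_gen_aut gen_b Dg).
Qed.

Lemma chi_inj : {in D &, injective chi}.
Proof.
move=> g h /D_nf [a [b [c ->]]] /D_nf [a' [b' [c' ->]]].
rewrite !chi_nf_col3 => /col3_inj [eq_c eq_b eq_a].
have {}eq_a : (a%:R : F) = a'%:R by apply: (mulIf (invr_neq0 two_neq0)).
have {}eq_b : (b%:R : F) = b'%:R.
  by apply: (mulIf (invr_neq0 two_neq0)); apply: oppr_inj.
move: eq_c; rewrite eq_a eq_b => /addIr eq_c.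
move: eq_a eq_b eq_c => /(Fp_nat_eq q_pr) eq_a /(Fp_nat_eq q_pr) eq_b.
move=> /(Fp_nat_eq q_pr) eq_c.
rewrite -(expg_mod_order d1 a) -(expg_mod_order d1 a') -(expg_mod_order d2 b).
rewrite -(expg_mod_order d2 b') -(expg_mod_order d3 c) -(expg_mod_order d3 c').
by rewrite ord_d1 ord_d2 ord_d3 eq_a eq_b eq_c.
Qed.

Lemma chi_surj m : exists2 g, g \in D & chi g = m.
Proof.
rewrite [m]col3E; move: (m 0 0) (m 1 0) (m 2 0) => x y w.
set a := val (2%:R * w); set b := val (- (2%:R * y)).
set c := val (x + (a%:R * b%:R / 2%:R : F)).
exists (d1 ^+ a * d2 ^+ b * d3 ^+ c)%g; first exact: nf_in_D.
rewrite chi_nf_col3 /c natr_Zp /b natr_Zp /a natr_Zp.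
by have := two_neq0; move=> ?; congr col3; field.
Qed.

Lemma IYB_structure_M : IYB_structure D A (fun g m => rho g *m m) (actA_M Delta) chi.
Proof.
split; [split; split | exact: chi_cocycle | exact: chi_inj | exact: chi_surj |].
- by move=> g _ m m'; rewrite mulmxDr.
- by move=> m; rewrite rho1 mul1mx.
- by move=> g h Dg Dh m; rewrite rho_mulmx.
- by move=> a _; apply: actA_M_add.
- exact: actA1.
- by move=> a b Aa Ab m; rewrite actAM.
- by move=> a g Aa Dg m; rewrite actA_rho.
- exact: chi_equiv.
Qed.

(** * Fixed points of [alpha2], [alpha1] and [alpha1 alpha2^-1] in [D] *)

Local Notation gamma := (alpha1 * alpha2^-1)%g.

Lemma gamma_in_A : gamma \in A.
Proof. by rewrite groupM ?groupV ?alpha1_in_A ?alpha2_in_A. Qed.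

Lemma gamma_d3 : gamma d3 = d3.
Proof. by rewrite permM alpha1_d3 -alpha2_d3 permK. Qed.

Lemma z_fixed0 x : x = z * x -> x = 0.
Proof. by move=> xz; apply: (@mul_neq_eq0 _ 1 z); rewrite ?mul1r // eq_sym z_neq1. Qed.

Lemma fix_alpha2 g : g \in D -> alpha2 g = g -> exists k, g = (d1 ^+ k)%g.
Proof.
move=> Dg fix_g; have [x [y [w chi_g]]] := col3_surj (chi g).
have := chi_equiv alpha2_in_A Dg.
rewrite fix_g chi_g actA_alpha2 => /col3_inj [/z_fixed0 x0 /z_fixed0 y0 _].
exists (val (2%:R * w)); apply: chi_inj; rewrite ?groupX ?d1_in_D //.
by rewrite chi_d1X natr_Zp chi_g x0 y0; have := two_neq0; move=> ?; congr col3; field.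
Qed.

Lemma fix_alpha1 g : g \in D -> alpha1 g = g -> exists k, g = (d2 ^+ k)%g.
Proof.
move=> Dg fix_g; have [x [y [w chi_g]]] := col3_surj (chi g).
have := chi_equiv alpha1_in_A Dg.
rewrite fix_g chi_g actA_alpha1 => /col3_inj [/z_fixed0 x0 _ /z_fixed0 w0].
exists (val (- (2%:R * y))); apply: chi_inj; rewrite ?groupX ?d2_in_D //.
by rewrite chi_d2X natr_Zp chi_g x0 w0; have := two_neq0; move=> ?; congr col3; field.
Qed.

Lemma fix_gamma g : g \in D -> gamma g = g -> exists k, g = (d3 ^+ k)%g.
Proof.
move=> Dg; rewrite permM => fix_g; have [x [y [w chi_g]]] := col3_surj (chi g).
have alpha12_g : alpha1 g = alpha2 g by rewrite -[in RHS]fix_g permKV.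
have := chi_equiv alpha1_in_A Dg.
rewrite alpha12_g (chi_equiv alpha2_in_A Dg) chi_g actA_alpha1 actA_alpha2.
case/col3_inj => _ /esym/z_fixed0 y0 /z_fixed0 w0.
exists (val x); apply: chi_inj; rewrite ?groupX ?d3_in_D //.
by rewrite chi_d3X natr_Zp chi_g y0 w0.
Qed.

(** * Uniqueness *)

Section Uniqueness.
Variables (N : zmodType) (lam : gT -> N -> N) (al : {perm gT} -> N -> N) (c : gT -> N).
Hypothesis N_IYB : IYB_structure D A lam al c.

Lemma lam_add g : g \in D -> {morph lam g : m m' / m + m'}.
Proof. by case: N_IYB => [[[lamD _ _] _] _ _ _ _] Dg m m'; apply: lamD. Qed.

Lemma lam1 m : lam 1%g m = m.
Proof. by case: N_IYB => [[[_ -> _] _] _ _ _ _]. Qed.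

Lemma lamM g h m : g \in D -> h \in D -> lam (g * h)%g m = lam g (lam h m).
Proof. by case: N_IYB => [[[_ _ lamM] _] _ _ _ _] Dg Dh; apply: lamM. Qed.

Lemma al_add a : a \in A -> {morph al a : m m' / m + m'}.
Proof. by case: N_IYB => [[_ [alD _ _ _]] _ _ _ _] Aa m m'; apply: alD. Qed.

Lemma al1 m : al 1%g m = m.
Proof. by case: N_IYB => [[_ [_ -> _ _]] _ _ _ _]. Qed.

Lemma alM a b m : a \in A -> b \in A -> al (b * a)%g m = al a (al b m).
Proof. by case: N_IYB => [[_ [_ _ alM _]] _ _ _ _] Aa Ab; apply: alM. Qed.

Lemma al_lam a g m : a \in A -> g \in D -> al a (lam g m) = lam (a g) (al a m).
Proof. by case: N_IYB => [[_ [_ _ _ al_lam]] _ _ _ _] Aa Dg; apply: al_lam. Qed.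

Lemma c_cocycle g h : g \in D -> h \in D -> c (g * h)%g = c g + lam g (c h).
Proof. by case: N_IYB => _ cocycle _ _ _; apply: cocycle. Qed.

Lemma c_inj : {in D &, injective c}.
Proof. by case: N_IYB. Qed.

Lemma c_surj m : exists2 g, g \in D & c g = m.
Proof. by case: N_IYB => _ _ _ surj _; apply: surj. Qed.

Lemma c_equiv a g : a \in A -> g \in D -> c (a g) = al a (c g).
Proof. by case: N_IYB => _ _ _ _ equiv; apply: equiv. Qed.

Lemma c1 : c 1%g = 0.
Proof.
have := c_cocycle (group1 D) (group1 D); rewrite mulg1 lam1 => c11.
by apply: (addrI (c 1%g)); rewrite addr0 -c11.
Qed.

Lemma lamX g n m : g \in D -> lam (g ^+ n)%g m = iter n (lam g) m.
Proof. by move=> Dg; elim: n => [|n IHn]; rewrite ?lam1 // expgS lamM ?groupX // IHn. Qed.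

Lemma lam_iter_order g m : g \in D -> iter #[g]%g (lam g) m = m.
Proof. by move=> Dg; rewrite -lamX // expg_order lam1. Qed.

(* If the fixed points of [s] in [D] are exactly [<[d]>], those of [al s]
   in [N] form the subgroup [c @: <[d]>] of order [q]; [lam d] acts on it
   with order dividing [q], hence trivially, and [c] is additive on [<[d]>]. *)
Section PrimeOrderGenerator.
Variables (s : {perm gT}) (d : gT).
Hypotheses (As : s \in A) (Dd : d \in D) (ord_d : #[d]%g = q) (s_d : s d = d)
  (fix_s : forall g, g \in D -> s g = g -> exists k, g = (d ^+ k)%g).

Lemma lam_fixed_gen : lam d (c d) = c d.
Proof.
pose e n := c (d ^+ n)%g.
have fix_al_s m : al s m = m -> exists k, m = e k.
  have [g Dg <-] := c_surj m; rewrite -c_equiv // => /(c_inj (A_in_D As Dg) Dg).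
  by move/(fix_s Dg) => [k ->]; exists k.
have al_e i : al s (e i) = e i by rewrite -c_equiv ?groupX // A_morphX // s_d.
suff: lam d (e 1%N) = e 1%N by rewrite /e expg1.
apply: (enum_subgroup_fixed q_pr) => //.
- move=> i j lt_iq lt_jq /(c_inj (groupX _ Dd) (groupX _ Dd)) /eqP.
  by rewrite eq_expg_mod_order ord_d !modn_small // => /eqP.
- by move=> n; rewrite /e -{1}(expg_mod_order d n) ord_d.
- by rewrite /e c1.
- by move=> i j; apply: fix_al_s; rewrite al_add ?al_e.
- exact: lam_add.
- by move=> i; apply: fix_al_s; rewrite al_lam // s_d al_e.
- by rewrite -ord_d lam_iter_order.
Qed.

Lemma c_expg n : c (d ^+ n)%g = c d *+ n.
Proof.
elim: n => [|n IHn]; first by rewrite c1.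
by rewrite expgS c_cocycle ?groupX // IHn (morphDMn (lam_add Dd)) lam_fixed_gen mulrS.
Qed.

Lemma c_gen_torsion : c d *+ q = 0.
Proof. by rewrite -c_expg -ord_d expg_order c1. Qed.

End PrimeOrderGenerator.
Local Notation x1 := (c d1).
Local Notation x2 := (c d2).
Local Notation x3 := (c d3).

Lemma c_d1X n : c (d1 ^+ n)%g = x1 *+ n.
Proof. exact: c_expg alpha2_in_A d1_in_D ord_d1 alpha2_d1 fix_alpha2 n. Qed.
Lemma c_d2X n : c (d2 ^+ n)%g = x2 *+ n.
Proof. exact: c_expg alpha1_in_A d2_in_D ord_d2 alpha1_d2 fix_alpha1 n. Qed.
Lemma c_d3X n : c (d3 ^+ n)%g = x3 *+ n.
Proof. exact: c_expg gamma_in_A d3_in_D ord_d3 gamma_d3 fix_gamma n. Qed.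

Lemma x1_torsion : x1 *+ q = 0.
Proof. exact: c_gen_torsion alpha2_in_A d1_in_D ord_d1 alpha2_d1 fix_alpha2. Qed.
Lemma x2_torsion : x2 *+ q = 0.
Proof. exact: c_gen_torsion alpha1_in_A d2_in_D ord_d2 alpha1_d2 fix_alpha1. Qed.
Lemma x3_torsion : x3 *+ q = 0.
Proof. exact: c_gen_torsion gamma_in_A d3_in_D ord_d3 gamma_d3 fix_gamma. Qed.

Lemma c_neq0 g : g \in D -> #[g]%g = q -> c g != 0.
Proof.
move=> Dg ord_g; apply: contraTneq (prime_gt1 q_pr) => cg0.
by rewrite -ord_g (c_inj Dg (group1 D)) ?c1 // order1.
Qed.

Lemma al_alpha1_x :
  [/\ al alpha1 x1 = scaleFp z x1, al alpha1 x2 = x2 & al alpha1 x3 = scaleFp z x3].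
Proof.
rewrite -!c_equiv ?d1_in_D ?d2_in_D ?d3_in_D ?alpha1_in_A //.
rewrite alpha1_d1 alpha1_d2 alpha1_d3 !zexpgE // c_d1X c_d3X -zeta_natE.
by rewrite !scaleFp_nat ?x1_torsion ?x3_torsion.
Qed.

Lemma al_alpha2_x :
  [/\ al alpha2 x1 = x1, al alpha2 x2 = scaleFp z x2 & al alpha2 x3 = scaleFp z x3].
Proof.
rewrite -!c_equiv ?d1_in_D ?d2_in_D ?d3_in_D ?alpha2_in_A //.
rewrite alpha2_d1 alpha2_d2 alpha2_d3 !zexpgE // c_d2X c_d3X -zeta_natE.
by rewrite !scaleFp_nat ?x2_torsion ?x3_torsion.
Qed.

Lemma al_tau_x : [/\ al tau x1 = x2, al tau x2 = x1 & al tau x3 = scaleFp (-1 : F) x3].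
Proof.
rewrite -!c_equiv ?d1_in_D ?d2_in_D ?d3_in_D ?tau_in_A // tau_d1 tau_d2 tau_d3.
by rewrite invg_expg ord_d3 c_d3X -Fp_pred scaleFp_nat ?x3_torsion.
Qed.

Definition comb (a b k : F) : N := scaleFp a x1 + scaleFp b x2 + scaleFp k x3.

Lemma combD a b k a' b' k' :
  comb a b k + comb a' b' k' = comb (a + a') (b + b') (k + k').
Proof.
rewrite /comb !(scaleFpDl q_pr) ?x1_torsion ?x2_torsion ?x3_torsion //.
by rewrite addrACA [X in X + _]addrACA.
Qed.

Lemma combN a b k : - comb a b k = comb (- a) (- b) (- k).
Proof.
by rewrite /comb !(scaleNFp q_pr) ?x1_torsion ?x2_torsion ?x3_torsion // !opprD.
Qed.

Lemma scaleFp_comb s a b k : scaleFp s (comb a b k) = comb (s * a) (s * b) (s * k).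
Proof.
by rewrite /comb !scaleFpDr !(scaleFpA q_pr) ?x1_torsion ?x2_torsion ?x3_torsion.
Qed.

Lemma comb_morph (f : N -> N) a b k : {morph f : m m' / m + m'} ->
  f (comb a b k) = scaleFp a (f x1) + scaleFp b (f x2) + scaleFp k (f x3).
Proof. by move=> fD; rewrite /comb !fD !(scaleFp_morph _ _ fD). Qed.

Lemma comb1 a : comb a 0 0 = scaleFp a x1.
Proof. by rewrite /comb !scale0Fp !addr0. Qed.
Lemma comb2 b : comb 0 b 0 = scaleFp b x2.
Proof. by rewrite /comb !scale0Fp addr0 add0r. Qed.
Lemma comb3 k : comb 0 0 k = scaleFp k x3.
Proof. by rewrite /comb !scale0Fp !add0r. Qed.

Lemma x1_comb : x1 = comb 1 0 0. Proof. by rewrite comb1 (scale1Fp q_pr) ?x1_torsion. Qed.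
Lemma x2_comb : x2 = comb 0 1 0. Proof. by rewrite comb2 (scale1Fp q_pr) ?x2_torsion. Qed.
Lemma x3_comb : x3 = comb 0 0 1. Proof. by rewrite comb3 (scale1Fp q_pr) ?x3_torsion. Qed.

Lemma al_alpha1_comb a b k : al alpha1 (comb a b k) = comb (a * z) b (k * z).
Proof.
rewrite (comb_morph _ _ _ (al_add alpha1_in_A)); have [-> -> ->] := al_alpha1_x.
by rewrite -!(scaleFpA q_pr) ?x1_torsion ?x3_torsion.
Qed.

Lemma al_alpha2_comb a b k : al alpha2 (comb a b k) = comb a (b * z) (k * z).
Proof.
rewrite (comb_morph _ _ _ (al_add alpha2_in_A)); have [-> -> ->] := al_alpha2_x.
by rewrite -!(scaleFpA q_pr) ?x2_torsion ?x3_torsion.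
Qed.

Lemma al_tau_comb a b k : al tau (comb a b k) = comb b a (- k).
Proof.
rewrite (comb_morph _ _ _ (al_add tau_in_A)); have [-> -> ->] := al_tau_x.
by rewrite -(scaleFpA q_pr) ?x3_torsion // mulrN1 /comb [scaleFp a x2 + _]addrC.
Qed.

Lemma al_gamma_comb a b k : al gamma (comb a b k) = comb (a * z) (b * z^-1) k.
Proof.
have al_alpha2V : al alpha2^-1%g (comb (a * z) b (k * z)) = comb (a * z) (b * z^-1) k.
  rewrite -[in LHS](divfK z_neq0 b) -al_alpha2_comb.
  by rewrite -alM ?groupV ?alpha2_in_A // mulgV al1.
by rewrite alM ?groupV ?alpha1_in_A ?alpha2_in_A // al_alpha1_comb al_alpha2V.
Qed.
Lemma comb_eq0 a b k : comb a b k = 0 -> [/\ a = 0, b = 0 & k = 0].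
Proof.
move=> comb0.
have al_z s : s \in A -> al s (comb a b k) - scaleFp z (comb a b k) = 0.
  by move=> As; rewrite comb0 (morphD0 (al_add As)) /scaleFp mul0rn subr0.
have a0 : a = 0.
  apply/z_fixed0/subr0_eq/(scaleFp_eq0 q_pr x1_torsion (c_neq0 d1_in_D ord_d1)).
  rewrite -comb1 -(al_z _ alpha2_in_A) al_alpha2_comb scaleFp_comb combN combD.
  by congr comb; ring.
have b0 : b = 0.
  apply/z_fixed0/subr0_eq/(scaleFp_eq0 q_pr x2_torsion (c_neq0 d2_in_D ord_d2)).
  rewrite -comb2 -(al_z _ alpha1_in_A) al_alpha1_comb scaleFp_comb combN combD.
  by congr comb; ring.
split=> //; move: comb0; rewrite a0 b0 comb3.
exact: (scaleFp_eq0 q_pr x3_torsion (c_neq0 d3_in_D ord_d3)).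
Qed.

Lemma comb_inj a b k a' b' k' :
  comb a b k = comb a' b' k' -> [/\ a = a', b = b' & k = k'].
Proof.
move=> eq_comb; have : comb (a - a') (b - b') (k - k') = 0.
  by rewrite -combD -combN eq_comb subrr.
by case/comb_eq0 => /subr0_eq -> /subr0_eq -> /subr0_eq ->.
Qed.

(* [comb] is injective on [F^3] and [N] has [#|D| = q^3] elements. *)
Lemma comb_surj v : exists a b k, v = comb a b k.
Proof.
pose P (t : F * F * F) : gT := odflt 1%g [pick g in D | c g == comb t.1.1 t.1.2 t.2].
have PE t : P t \in D /\ c (P t) = comb t.1.1 t.1.2 t.2.
  rewrite /P; case: pickP => [g /andP [Dg /eqP ->] //|none].
  have [g Dg cg] := c_surj (comb t.1.1 t.1.2 t.2).
  by have := none g; rewrite Dg cg eqxx.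
have P_inj : injective P.
  move=> [[a b] k] [[a' b'] k'] eq_P.
  have := (PE (a, b, k)).2; rewrite eq_P (PE (a', b', k')).2 /=.
  by move=> /esym/comb_inj [-> -> ->].
have imP : P @: setT = D.
  apply/eqP; rewrite eqEcard card_imset // cardsT !card_prod !card_Fp // card_D.
  rewrite !expnS expn0 muln1 mulnA leqnn andbT.
  by apply/subsetP => g /imsetP [t _ ->]; case: (PE t).
have [g] := c_surj v; rewrite -imP => /imsetP [[[a b] k] _ ->] <-.
by exists a, b, k; case: (PE (a, b, k)).
Qed.

Lemma gamma_eigen_z v : al gamma v = scaleFp z v -> exists a : F, v = scaleFp a x1.
Proof.
have [a [b [k ->]]] := comb_surj v.
rewrite al_gamma_comb scaleFp_comb => /comb_inj [_ b_eq /z_fixed0 k0].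
exists a; rewrite -comb1 k0; congr comb.
by apply: (@mul_neq_eq0 _ z^-1 z); rewrite ?zV_neq_z // mulrC.
Qed.

Lemma gamma_eigen_zV v : al gamma v = scaleFp z^-1 v -> exists b : F, v = scaleFp b x2.
Proof.
have [a [b [k ->]]] := comb_surj v.
rewrite al_gamma_comb scaleFp_comb => /comb_inj [a_eq _ k_eq].
exists b; rewrite -comb2; congr comb.
- by apply: (@mul_neq_eq0 _ z z^-1); rewrite 1?eq_sym ?zV_neq_z // mulrC.
- by apply: (@mul_neq_eq0 _ 1 z^-1); rewrite 1?eq_sym ?zV_neq1 // mul1r.
Qed.

Lemma alpha2_eigen_z v : al alpha2 v = scaleFp z v -> exists b k, v = comb 0 b k.
Proof.
have [a [b [k ->]]] := comb_surj v.
by rewrite al_alpha2_comb scaleFp_comb => /comb_inj [/z_fixed0 -> _ _]; exists b, k.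
Qed.

Lemma alpha1_eigen_z v : al alpha1 v = scaleFp z v -> exists a k, v = comb a 0 k.
Proof.
have [a [b [k ->]]] := comb_surj v.
by rewrite al_alpha1_comb scaleFp_comb => /comb_inj [_ /z_fixed0 -> _]; exists a, k.
Qed.

Lemma lam_eigen_fixed d v (s : F) : d \in D -> #[d]%g = q -> v *+ q = 0 ->
  lam d v = scaleFp s v -> lam d v = v.
Proof.
move=> Dd ord_d vq lam_v.
by apply: (scaleFp_iter_fixed q_pr vq (lam_add Dd) lam_v); rewrite -ord_d lam_iter_order.
Qed.

Lemma lam_d3_x1 : lam d3 x1 = x1.
Proof.
have al_gamma_x1 : al gamma x1 = scaleFp z x1.
  by rewrite [in LHS]x1_comb al_gamma_comb mul1r mul0r comb1.
have [a lam_x1] : exists a : F, lam d3 x1 = scaleFp a x1.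
  apply: gamma_eigen_z; rewrite al_lam ?gamma_in_A ?d3_in_D // gamma_d3 al_gamma_x1.
  exact: scaleFp_morph (lam_add d3_in_D).
exact: lam_eigen_fixed d3_in_D ord_d3 x1_torsion lam_x1.
Qed.

Lemma lam_d3_x2 : lam d3 x2 = x2.
Proof.
have al_gamma_x2 : al gamma x2 = scaleFp z^-1 x2.
  by rewrite [in LHS]x2_comb al_gamma_comb mul1r mul0r comb2.
have [b lam_x2] : exists b : F, lam d3 x2 = scaleFp b x2.
  apply: gamma_eigen_zV; rewrite al_lam ?gamma_in_A ?d3_in_D // gamma_d3 al_gamma_x2.
  exact: scaleFp_morph (lam_add d3_in_D).
exact: lam_eigen_fixed d3_in_D ord_d3 x2_torsion lam_x2.
Qed.

Lemma lam_d1_x3 : lam d1 x3 = x3.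
Proof.
have := congr1 c (d3_comm d1_in_D).
by rewrite !c_cocycle ?d1_in_D ?d3_in_D // lam_d3_x1 addrC => /addrI.
Qed.

Lemma lam_d2_x3 : lam d2 x3 = x3.
Proof.
have := congr1 c (d3_comm d2_in_D).
by rewrite !c_cocycle ?d2_in_D ?d3_in_D // lam_d3_x2 addrC => /addrI.
Qed.

Lemma lam_d1_x1 : lam d1 x1 = x1.
Proof.
by have := c_d1X 2; rewrite mulr2n expgS expg1 c_cocycle ?d1_in_D // => /addrI.
Qed.

Lemma lam_d2_x2 : lam d2 x2 = x2.
Proof.
by have := c_d2X 2; rewrite mulr2n expgS expg1 c_cocycle ?d2_in_D // => /addrI.
Qed.

(* [alpha2] and [alpha1] confine [lam d1 x2] and [lam d2 x1]; the relation
   [d2 d1 = d1 d2 d3] and [tau] then fix the remaining coordinate. *)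
Lemma lam_d1_x2_d2_x1 :
  lam d1 x2 = comb 0 1 (- 2%:R^-1) /\ lam d2 x1 = comb 1 0 2%:R^-1.
Proof.
have [b [k lam_d1_x2]] : exists b k, lam d1 x2 = comb 0 b k.
  apply: alpha2_eigen_z; rewrite al_lam ?alpha2_in_A ?d1_in_D // alpha2_d1.
  by have [_ -> _] := al_alpha2_x; apply: scaleFp_morph (lam_add d1_in_D).
have [a' [k' lam_d2_x1]] : exists a k, lam d2 x1 = comb a 0 k.
  apply: alpha1_eigen_z; rewrite al_lam ?alpha1_in_A ?d2_in_D // alpha1_d2.
  by have [-> _ _] := al_alpha1_x; apply: scaleFp_morph (lam_add d2_in_D).
have := congr1 c d2_d1.
rewrite -mulgA !c_cocycle ?groupM ?d1_in_D ?d2_in_D ?d3_in_D // lam_d2_x3.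
rewrite lam_add ?d1_in_D // lam_d1_x3 lam_d1_x2 lam_d2_x1 x1_comb x2_comb x3_comb !combD.
rewrite !addr0 !add0r => /comb_inj [-> <- k'E].
have := congr1 (al tau) lam_d1_x2; rewrite al_lam ?tau_in_A ?d1_in_D // tau_d1.
have [_ -> _] := al_tau_x; rewrite lam_d2_x1 al_tau_comb k'E => /comb_inj [_ _ kE].
have k_half : k = - 2%:R^-1.
  apply: (mulIf two_neq0); rewrite mulNr mulVf ?two_neq0 // mulr_natr mulr2n.
  by rewrite -{1}[k]opprK -kE opprD addrAC addNr add0r.
rewrite k_half; split=> //; congr comb.
by have := two_neq0; move=> ?; field.
Qed.
Lemma lam_d1X_comb n a b t :
  lam (d1 ^+ n)%g (comb a b t) = comb a b (t - n%:R * b / 2%:R).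
Proof.
rewrite lamX ?d1_in_D //; elim: n => [|n IHn]; first by rewrite mul0r mul0r subr0.
rewrite iterS IHn (comb_morph _ _ _ (lam_add d1_in_D)) lam_d1_x1 lam_d1_x3.
rewrite (lam_d1_x2_d2_x1).1 scaleFp_comb -comb1 -comb3 !combD.
by congr comb; rewrite ?mulrS; ring.
Qed.

Lemma lam_d2X_comb n a b t :
  lam (d2 ^+ n)%g (comb a b t) = comb a b (t + n%:R * a / 2%:R).
Proof.
rewrite lamX ?d2_in_D //; elim: n => [|n IHn]; first by rewrite mul0r mul0r addr0.
rewrite iterS IHn (comb_morph _ _ _ (lam_add d2_in_D)) lam_d2_x2 lam_d2_x3.
rewrite (lam_d1_x2_d2_x1).2 scaleFp_comb -comb2 -comb3 !combD.
by congr comb; rewrite ?mulrS; ring.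
Qed.

Lemma c_nf a b n : c (d1 ^+ a * d2 ^+ b * d3 ^+ n)%g =
  comb a%:R b%:R (n%:R - a%:R * b%:R / 2%:R).
Proof.
rewrite !c_cocycle ?groupM ?groupX ?d1_in_D ?d2_in_D ?d3_in_D //.
rewrite lamM ?groupX ?d1_in_D ?d2_in_D //.
rewrite c_d1X c_d2X c_d3X -(scaleFp_nat q_pr x1_torsion) -(scaleFp_nat q_pr x2_torsion).
rewrite -(scaleFp_nat q_pr x3_torsion).
rewrite -comb1 -comb2 -comb3 lam_d2X_comb !lam_d1X_comb !combD.
by congr comb; ring.
Qed.

(* [phi] is the linear map sending [chi d_i] to [x_i]. *)
Definition phi (m : 'cV[F]_3) : N :=
  comb (2%:R * m 2 0) (- (2%:R * m 1 0)) (m 0 0).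

Lemma phi_add : {morph phi : m m' / m + m'}.
Proof. by move=> m m'; rewrite /phi !mxE combD; congr comb; ring. Qed.

Lemma phi_chi g : g \in D -> phi (chi g) = c g.
Proof.
move=> /D_nf [a [b [n ->]]]; rewrite chi_nf_col3 c_nf /phi !mxE /=.
by have := two_neq0; move=> ?; congr comb; field.
Qed.

Lemma IYB_iso_M : IYB_iso D A (fun g m => rho g *m m) (actA_M Delta) chi lam al c.
Proof.
pose psi m := chi (odflt 1%g [pick g in D | c g == m]).
have psiE g : g \in D -> psi (c g) = chi g.
  rewrite /psi => Dg; case: pickP => [h /andP [Dh /eqP/(c_inj Dh Dg) -> //]|none].
  by have := none g; rewrite Dg eqxx.
exists phi; split=> [||g Dg m|a Aa m|g Dg]; last by rewrite phi_chi.
- exact: phi_add.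
- exists psi => [m|m].
    by have [g Dg <-] := chi_surj m; rewrite phi_chi ?psiE.
  by have [g Dg <-] := c_surj m; rewrite psiE ?phi_chi.
- have [h Dh <-] := chi_surj m.
  have -> : rho g *m chi h = chi (g * h)%g - chi g by rewrite chi_cocycle // addrC addKr.
  by rewrite phi_add (morphDN phi_add) !phi_chi ?groupM // c_cocycle // addrC addKr.
- have [h Dh <-] := chi_surj m.
  by rewrite -chi_equiv // !phi_chi ?A_in_D // c_equiv.
Qed.
End Uniqueness.
End Setting.

Theorem mainTheorem4 (q : nat) (zeta : int) (gT : finGroupType) (D : {group gT})
  (d1 d2 d3 : gT) (tau alpha1 alpha2 : {perm gT})
  (Delta : {perm gT} -> 'M['F_q]_2) (rho : gT -> 'M['F_q]_3) (chi : gT -> 'cV['F_q]_3) :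
  prime q -> (q %% 4 = 1)%N ->
  (q.-1).-primitive_root (zeta%:~R : 'F_q) ->
  #|D| = (q ^ 3)%N -> D :=: <<[set d1; d2; d3]>>%g ->
  #[d1]%g = q -> #[d2]%g = q -> #[d3]%g = q ->
  d3 \in 'Z(D)%g -> (d1^-1 * d2 * d1)%g = (d2 * d3)%g ->
  ((<[d3]> \x <[d2]>) ><| <[d1]>)%g = D ->
  tau \in Aut D -> alpha1 \in Aut D -> alpha2 \in Aut D ->
  tau d1 = d2 -> tau d2 = d1 -> tau d3 = (d3^-1)%g ->
  alpha1 d1 = zexpg d1 zeta -> alpha1 d2 = d2 -> alpha1 d3 = zexpg d3 zeta ->
  alpha2 d1 = d1 -> alpha2 d2 = zexpg d2 zeta -> alpha2 d3 = zexpg d3 zeta ->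
  let A := <<[set tau; alpha1; alpha2]>>%g in
  (forall a b, a \in A -> b \in A -> Delta (b * a)%g = (Delta a *m Delta b)%R) ->
  Delta tau = swap2 _ -> Delta alpha1 = diag2 (zeta%:~R) 1%R -> Delta alpha2 = diag2 1%R (zeta%:~R) ->
  (forall g h, g \in D -> h \in D -> rho (g * h)%g = (rho g *m rho h)%R) ->
  rho d1 = matX1 _ -> rho d2 = matX2 _ -> rho d3 = 1%R ->
  (forall n1 n2 n3 : nat, chi (d1 ^+ n1 * d2 ^+ n2 * d3 ^+ n3)%g = chi_val _ n1 n2 n3) ->
  IYB_structure D A (fun g m => (rho g *m m)%R) (actA_M Delta) chi /\
  (forall (M' : zmodType) (actG' : gT -> M' -> M') (actA' : {perm gT} -> M' -> M')
          (chi' : gT -> M'),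
     IYB_structure D A actG' actA' chi' ->
     IYB_iso D A (fun g m => (rho g *m m)%R) (actA_M Delta) chi actG' actA' chi').
Proof.
move=> q_pr q_mod4 zeta_prim card_D D_gen ord_d1 ord_d2 ord_d3 d3_center d1_conj_d2 _
  tau_Aut alpha1_Aut alpha2_Aut tau_d1 tau_d2 tau_d3 alpha1_d1 alpha1_d2 alpha1_d3
  alpha2_d1 alpha2_d2 alpha2_d3 A Delta_morph Delta_tau Delta_alpha1 Delta_alpha2
  rho_morph rho_d1 rho_d2 rho_d3 chi_nf.
split=> [|N lam al c N_IYB].
  by apply: (IYB_structure_M (zeta := zeta) (d1 := d1) (d2 := d2) (d3 := d3)).
by apply: (IYB_iso_M (zeta := zeta) (d1 := d1) (d2 := d2) (d3 := d3)).
Qed.
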